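(* Let $G$ be a $\sigma$-compact locally compact Abelian group and $\omega=\sum_{x\in\Gamma}\omega(x)\delta_x$ a translation bounded discrete measure on $G$. (i) If $\omega$ is norm-almost periodic, then $\omega$ is sup-almost periodic. (ii) If $\Gamma$ is weakly uniformly discrete, then $\omega$ is norm-almost periodic if and only if $\omega$ is sup-almost periodic.
   Context: Fix a compact $K\subset G$ with nonempty interior. For a translation bounded measure $\mu$, $\|\mu\|_K:=\sup_{t\in G}|\mu|(t+K)$, and $T_t\mu$ denotes the translate $T_t\mu(A)=\mu(A-t)$. $\omega$ is norm-almost periodic if for every $\varepsilon>0$ the set $P^K_\varepsilon(\omega):=\{t\in G:\|\omega-T_t\omega\|_K<\varepsilon\}$ is relatively dense. A discrete measure $\omega$ is sup-almost periodic if for every $\varepsilon>0$ the set $P^\infty_\varepsilon(\omega):=\{t\in G:\sup_{x\in G}|\omega(\{t+x\})-\omega(\{x\})|<\varepsilon\}$ is relatively dense. A set $\Gamma$ is weakly uniformly discrete if $\sup_{x\in G}\#(\Gamma\cap(x+K))<\infty$ for every compact $K$. Relatively dense: $A+K'=G$ for some compact $K'$. *)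

From Stdlib Require Import Reals List.
Import ListNotations.
Open Scope R_scope.

Definition Cx := (R * R)%type.
Definition C0 : Cx := (0, 0).
Definition Csub (a b : Cx) : Cx := (fst a - fst b, snd a - snd b).
Definition Cnorm (z : Cx) : R := sqrt (fst z * fst z + snd z * snd z).

Definition is_compact {T : Type} (op : (T -> Prop) -> Prop) (K : T -> Prop) : Prop :=
  forall (I : Type) (U : I -> T -> Prop),
    (forall i, op (U i)) ->
    (forall x, K x -> exists i, U i x) ->
    exists l : list I, forall x, K x -> exists i, In i l /\ U i x.

Record LCAGroup := {
  carrier :> Type;
  gadd : carrier -> carrier -> carrier;
  gopp : carrier -> carrier;
  gzero : carrier;
  gaddA : forall x y z, gadd x (gadd y z) = gadd (gadd x y) z;
  gaddC : forall x y, gadd x y = gadd y x;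
  gadd0 : forall x, gadd gzero x = x;
  gaddN : forall x, gadd (gopp x) x = gzero;
  gopen : (carrier -> Prop) -> Prop;
  gopen_full : gopen (fun _ => True);
  gopen_inter : forall U V, gopen U -> gopen V -> gopen (fun x => U x /\ V x);
  gopen_union : forall (I : Type) (U : I -> carrier -> Prop),
      (forall i, gopen (U i)) -> gopen (fun x => exists i, U i x);
  ghausdorff : forall x y, x <> y ->
      exists U V, gopen U /\ gopen V /\ U x /\ V y /\ (forall z, U z -> V z -> False);
  gadd_cont : forall U x y, gopen U -> U (gadd x y) ->
      exists V W, gopen V /\ gopen W /\ V x /\ W y /\
        (forall a b, V a -> W b -> U (gadd a b));
  gopp_cont : forall U, gopen U -> gopen (fun x => U (gopp x));
  glocally_compact : forall x, exists U Kx, gopen U /\ is_compact gopen Kx /\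
      U x /\ (forall y, U y -> Kx y)
}.

Arguments gadd {_}. Arguments gopp {_}. Arguments gzero {_}. Arguments gopen {_}.

Section Defs.
Variable G : LCAGroup.

Definition gcompact (K : G -> Prop) : Prop := is_compact gopen K.

Definition sigma_compact : Prop :=
  exists Kn : nat -> G -> Prop, (forall n, gcompact (Kn n)) /\ forall x, exists n, Kn n x.

Definition nonempty_interior (K : G -> Prop) : Prop :=
  exists U : G -> Prop, gopen U /\ (exists x, U x) /\ (forall x, U x -> K x).

Definition gsub (x y : G) : G := gadd x (gopp y).

Definition translate_set (t : G) (K : G -> Prop) : G -> Prop :=
  fun x => exists k, K k /\ x = gadd t k.

Definition relatively_dense (A : G -> Prop) : Prop :=
  exists K' : G -> Prop, gcompact K' /\
    forall g, exists a k, A a /\ K' k /\ g = gadd a k.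

Definition sum_list (l : list R) : R := fold_right Rplus 0 l.

(** For a discrete measure nu = sum_x nu(x) delta_x, |nu|(A) = sum_{x in A} |nu(x)|
    (a possibly infinite sum of nonnegative terms = sup of finite subsums).
    [tv_le nu A c] says |nu|(A) <= c. *)
Definition tv_le (nu : G -> Cx) (A : G -> Prop) (c : R) : Prop :=
  forall l : list G, NoDup l -> (forall x, In x l -> A x) ->
    sum_list (map (fun x => Cnorm (nu x)) l) <= c.

Definition normK_lt (K : G -> Prop) (nu : G -> Cx) (eps : R) : Prop :=
  exists c, c < eps /\ forall t, tv_le nu (translate_set t K) c.

Definition translation_bounded (K : G -> Prop) (w : G -> Cx) : Prop :=
  exists c, forall t, tv_le w (translate_set t K) c.

(** the point masses of omega - T_t omega, where T_t omega ({x}) = omega({x - t}) *)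
Definition diff_translate (w : G -> Cx) (t : G) : G -> Cx :=
  fun x => Csub (w x) (w (gsub x t)).

Definition P_K (K : G -> Prop) (w : G -> Cx) (eps : R) : G -> Prop :=
  fun t => normK_lt K (diff_translate w t) eps.

Definition norm_almost_periodic (K : G -> Prop) (w : G -> Cx) : Prop :=
  forall eps, 0 < eps -> relatively_dense (P_K K w eps).

Definition P_inf (w : G -> Cx) (eps : R) : G -> Prop :=
  fun t => exists c, c < eps /\ forall x, Cnorm (Csub (w (gadd t x)) (w x)) <= c.

Definition sup_almost_periodic (w : G -> Cx) : Prop :=
  forall eps, 0 < eps -> relatively_dense (P_inf w eps).

Definition weakly_uniformly_discrete (Gam : G -> Prop) : Prop :=
  forall K, gcompact K -> exists N : nat, forall x (l : list G), NoDup l ->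
    (forall y, In y l -> Gam y /\ translate_set x K y) -> (length l <= N)%nat.

End Defs.

From Stdlib Require Import Reals List.
From Stdlib Require Import Lra Classical ClassicalEpsilon.
Import ListNotations.
Open Scope R_scope.

(* (i) A single point mass of omega - T_t omega lies in some translate t' + K,
   so ||omega - T_t omega||_K dominates sup_x |omega(t+x) - omega(x)|, i.e.
   P^K_eps is contained in P^oo_eps.
   (ii) omega - T_t omega is supported on Gamma u (t + Gamma), and weak uniform
   discreteness bounds the number of such points in any translate of K by 2N;
   hence ||omega - T_t omega||_K <= 2N sup_x |omega(t+x) - omega(x)| and
   P^oo_{eps/(2N+1)} is contained in P^K_eps. *)

Definition card_le {T : Type} (A : T -> Prop) (n : nat) : Prop :=
  forall l, NoDup l -> (forall x, In x l -> A x) -> (length l <= n)%nat.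

Section Counting.
Variable T : Type.

Definition classicb (A : T -> Prop) (x : T) : bool :=
  if excluded_middle_informative (A x) then true else false.

Lemma classicbP (A : T -> Prop) (x : T) : classicb A x = true <-> A x.
Proof. unfold classicb; destruct excluded_middle_informative; intuition discriminate. Qed.

Lemma card_le_sub (A B : T -> Prop) (n : nat) :
  (forall x, A x -> B x) -> card_le B n -> card_le A n.
Proof. intros HAB HB l Hnd Hl. apply HB; auto. Qed.

Lemma card_le_union (A B : T -> Prop) (m n : nat) :
  card_le A m -> card_le B n -> card_le (fun x => A x \/ B x) (m + n).
Proof.
  intros HA HB l Hnd Hl. rewrite <- (filter_length (classicb A) l).
  apply Nat.add_le_mono; [apply HA | apply HB]; try now apply NoDup_filter.
  - intros x Hx; apply filter_In in Hx as [_ Hx]; now apply classicbP.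
  - intros x Hx; apply filter_In in Hx as [Hl' Hx].
    destruct (Hl x Hl') as [Ax|Bx]; [|exact Bx].
    apply classicbP in Ax; rewrite Ax in Hx; discriminate.
Qed.

Lemma card_le_preimage (A : T -> Prop) (f : T -> T) (n : nat) :
  (forall x y, f x = f y -> x = y) -> card_le A n -> card_le (fun x => A (f x)) n.
Proof.
  intros Hf HA l Hnd Hl. rewrite <- (length_map f).
  apply HA.
  - apply NoDup_map_NoDup_ForallPairs; [intros x y _ _; apply Hf | exact Hnd].
  - intros y Hy; apply in_map_iff in Hy as (x & <- & Hx); auto.
Qed.

Lemma sum_list_le_support (f : T -> R) (c : R) (l : list T) :
  (forall x, f x <= c) ->
  sum_list (map f l) <= c * INR (length (filter (classicb (fun x => f x <> 0)) l)).
Proof.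
  intros Hc; induction l as [|x l IH]; simpl; [lra|].
  destruct (classicb _ x) eqn:Hx; simpl length; [rewrite S_INR; specialize (Hc x); lra|].
  assert (f x = 0) as ->; [|lra].
  apply NNPP; intros Hnz; apply (classicbP (fun x => f x <> 0)) in Hnz; congruence.
Qed.

Lemma sum_list_le_card (A : T -> Prop) (f : T -> R) (c : R) (n : nat) (l : list T) :
  0 <= c -> (forall x, f x <= c) -> card_le (fun x => A x /\ f x <> 0) n ->
  NoDup l -> (forall x, In x l -> A x) -> sum_list (map f l) <= c * INR n.
Proof.
  intros Hc0 Hc Hn Hnd Hl. eapply Rle_trans; [now apply sum_list_le_support|].
  apply Rmult_le_compat_l, le_INR; [exact Hc0|]. apply Hn; [now apply NoDup_filter|].
  intros x Hx; apply filter_In in Hx as [Hx Hnz].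
  split; [auto | now apply (classicbP (fun x => f x <> 0))].
Qed.

End Counting.

Section Group.
Variable G : LCAGroup.

Lemma gsub_addl (t x : G) : gsub G (gadd t x) t = x.
Proof.
  unfold gsub. rewrite (gaddC _ t x), <- gaddA, (gaddC _ t), gaddN, gaddC, gadd0.
  reflexivity.
Qed.

Lemma gadd_subK (t x : G) : gadd t (gsub G x t) = x.
Proof.
  unfold gsub. rewrite (gaddC _ x), gaddA, (gaddC _ t), gaddN, gadd0. reflexivity.
Qed.

Lemma gsub_inj (t x y : G) : gsub G x t = gsub G y t -> x = y.
Proof. intros E. rewrite <- (gadd_subK t x), <- (gadd_subK t y), E. reflexivity. Qed.

Lemma translate_set_sub (K : G -> Prop) (s t x : G) :
  translate_set G s K x -> translate_set G (gsub G s t) K (gsub G x t).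
Proof.
  intros (k & Kk & ->). exists k; split; [exact Kk|].
  unfold gsub. rewrite <- gaddA, (gaddC _ k), gaddA. reflexivity.
Qed.

Lemma relatively_dense_mono (A B : G -> Prop) :
  (forall t, A t -> B t) -> relatively_dense G A -> relatively_dense G B.
Proof.
  intros HAB (K' & HK' & Hcov). exists K'; split; [exact HK'|].
  intros g; destruct (Hcov g) as (a & k & Aa & Kk & E). exists a, k; auto.
Qed.

Lemma Cnorm_ge0 (z : Cx) : 0 <= Cnorm z.
Proof. apply sqrt_pos. Qed.

Lemma Cnorm_C0 : Cnorm C0 = 0.
Proof. unfold Cnorm, C0; simpl. rewrite Rmult_0_l, Rplus_0_l. apply sqrt_0. Qed.

Lemma diff_translate_support (w : G -> Cx) (t x : G) :
  Cnorm (diff_translate G w t x) <> 0 -> w x <> C0 \/ w (gsub G x t) <> C0.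
Proof.
  intros Hnz. destruct (classic (w x = C0)) as [E1|E1]; [|now left].
  destruct (classic (w (gsub G x t) = C0)) as [E2|E2]; [|now right].
  exfalso; apply Hnz. unfold diff_translate. rewrite E1, E2.
  unfold Csub, C0; simpl. rewrite Rminus_0_r. exact Cnorm_C0.
Qed.

Lemma P_K_sub_P_inf (K : G -> Prop) (w : G -> Cx) (eps : R) (t : G) :
  (exists k, K k) -> P_K G K w eps t -> P_inf G w eps t.
Proof.
  intros [k Kk] (c & Hc & Htv). exists c; split; [exact Hc|]. intros x.
  assert (Hpt : translate_set G (gsub G (gadd t x) k) K (gadd t x)).
  { exists k; split; [exact Kk|]. symmetry; rewrite gaddC; apply gadd_subK. }
  assert (Hsingle : NoDup [gadd t x]) by (constructor; [intros [] | constructor]).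
  specialize (Htv (gsub G (gadd t x) k) [gadd t x] Hsingle). simpl in Htv. unfold diff_translate in Htv. rewrite gsub_addl, Rplus_0_r in Htv.
  apply Htv. intros y [<-|[]]. exact Hpt.
Qed.

Lemma P_inf_sub_P_K (K : G -> Prop) (Gam : G -> Prop) (w : G -> Cx) (N : nat)
    (eps : R) (t : G) :
  (forall x, w x <> C0 -> Gam x) ->
  (forall s, card_le (fun x => Gam x /\ translate_set G s K x) N) ->
  P_inf G w eps t -> P_K G K w ((2 * INR N + 1) * eps) t.
Proof.
  intros Hsupp HN (c & Hc & Hsup).
  assert (Hc0 : 0 <= c) by exact (Rle_trans _ _ _ (Cnorm_ge0 _) (Hsup gzero)).
  exists (c * INR (N + N)). split; [rewrite plus_INR; pose proof (pos_INR N); nra|].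
  intros s l Hnd Hl.
  apply (sum_list_le_card _ (translate_set G s K)); auto.
  - intros x. unfold diff_translate. rewrite <- (gadd_subK t x) at 1. apply Hsup.
  - eapply card_le_sub; [|exact (card_le_union _ _ _ _ _ (HN s)
      (card_le_preimage _ _ (fun x => gsub G x t) _ (gsub_inj t) (HN (gsub G s t))))].
    intros x [Hx Hnz]. simpl.
    destruct (diff_translate_support w t x Hnz) as [W|W]; [left|right]; split; auto.
    now apply translate_set_sub.
Qed.

End Group.

Lemma norm_almost_periodic_sup (G : LCAGroup) (K : G -> Prop) (w : G -> Cx) :
  nonempty_interior G K -> norm_almost_periodic G K w -> sup_almost_periodic G w.
Proof.
  intros (U & _ & [k Uk] & HUK) Hnap eps Heps.
  apply (relatively_dense_mono _ (P_K G K w eps)); [|exact (Hnap eps Heps)].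
  intros t; apply P_K_sub_P_inf; eauto.
Qed.

Theorem lemma3p4 (G : LCAGroup) (HG : sigma_compact G)
  (K : G -> Prop) (HK : gcompact G K) (HKi : nonempty_interior G K)
  (Gam : G -> Prop) (w : G -> Cx) (Hsupp : forall x, w x <> C0 -> Gam x)
  (Htb : translation_bounded G K w) :
  (norm_almost_periodic G K w -> sup_almost_periodic G w) /\
  (weakly_uniformly_discrete G Gam ->
     (norm_almost_periodic G K w <-> sup_almost_periodic G w)).
Proof.
  assert (Hi := norm_almost_periodic_sup G K w HKi).
  split; [exact Hi|]. intros Hwud. split; [exact Hi|]. intros Hsap eps Heps.
  destruct (Hwud K HK) as [N HN].
  assert (HN1 : 0 < 2 * INR N + 1) by (pose proof (pos_INR N); lra).
  apply (relatively_dense_mono _ (P_inf G w (eps / (2 * INR N + 1)))).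
  - intros t Ht. replace eps with ((2 * INR N + 1) * (eps / (2 * INR N + 1)))
      by (field; lra).
    exact (P_inf_sub_P_K G K Gam w N _ t Hsupp HN Ht).
  - apply Hsap, Rdiv_lt_0_compat; assumption.
Qed.
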